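(* Let $n \ge 1$ and $N = 2^n$. Let $B_0(N) = \pi_N^{-1}\left(\left\{\begin{pmatrix} * & * \\ 0 & * \end{pmatrix}\right\}\right) \subseteq \mathrm{GL}_2(\hat{\mathbb{Z}})$ be the Borel subgroup of level $N$ and $C_{ns}(N)$ the nonsplit Cartan subgroup of level $N$. Then $B_0(N)$ and $C_{ns}(N)$ are independent in $\mathrm{GL}_2(\hat{\mathbb{Z}})$, i.e. $[\mathrm{GL}_2(\hat{\mathbb{Z}}):B_0(N)\cap C_{ns}(N)] = [\mathrm{GL}_2(\hat{\mathbb{Z}}):B_0(N)]\,[\mathrm{GL}_2(\hat{\mathbb{Z}}):C_{ns}(N)]$; but for $n>1$ they are not geometrically independent, i.e. for $n > 1$, $[\mathrm{SL}_2(\hat{\mathbb{Z}}):B_0(N)\cap C_{ns}(N)\cap\mathrm{SL}_2(\hat{\mathbb{Z}})] \neq [\mathrm{SL}_2(\hat{\mathbb{Z}}):B_0(N)\cap\mathrm{SL}_2(\hat{\mathbb{Z}})]\,[\mathrm{SL}_2(\hat{\mathbb{Z}}):C_{ns}(N)\cap\mathrm{SL}_2(\hat{\mathbb{Z}})]$.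
   Context: $\hat{\mathbb{Z}} = \varprojlim_N \mathbb{Z}/N\mathbb{Z}$ and $\pi_N:\mathrm{GL}_2(\hat{\mathbb{Z}})\to \mathrm{GL}_2(\mathbb{Z}/N\mathbb{Z})$ is reduction. Nonsplit Cartan subgroup: let $R$ be an imaginary quadratic order in which every prime dividing $N$ (here, $2$) is inert, with an optimal embedding $\iota: R \to M_2(\mathbb{Z})$ and its reduction $\iota_N: R \to M_2(\mathbb{Z}/N\mathbb{Z})$; then $C_{ns}(N) = \pi_N^{-1}(\iota_N(R)^* )$, which is well defined up to conjugation in $\mathrm{GL}_2(\hat{\mathbb{Z}})$. *)

From mathcomp Require Import all_boot all_order all_algebra.


Import GRing.Theory Num.Theory.
Local Open Scope ring_scope.

(* Z/NZ for N >= 2 is 'Z_N.  Levels are indexed by n with N = n.+2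
   (level 1 is trivial and can be omitted from the inverse limit). *)

Definition zred (m n : nat) (x : 'Z_n) : 'Z_m := (nat_of_ord x)%:R.

(* GL_2(Zhat) = lim_N GL_2(Z/NZ): compatible families of invertible
   2x2 matrices over Z/NZ, N >= 2, indexed by divisibility. *)
Definition GL2hat : Type :=
  { g : forall n : nat, 'M['Z_(n.+2)]_2 |
      (forall n, g n \in unitmx) /\
      (forall m n, (m.+2 %| n.+2)%N -> g m = map_mx (zred m.+2 n.+2) (g n)) }.

(* the component of g at level N (meaningful for N >= 2), i.e. pi_N g *)
Definition lvl (g : GL2hat) (N : nat) : 'M['Z_((N.-2).+2)]_2 := sval g N.-2.

Definition in_coset (r h x : GL2hat) : Prop :=
  forall n, sval x n = sval r n *m sval h n.

Definition has_index (G H : GL2hat -> Prop) (k : nat) : Prop :=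
  (forall h, H h -> G h) /\
  exists r : 'I_k -> GL2hat,
    (forall i, G (r i)) /\
    (forall x, G x -> exists! i, exists h, H h /\ in_coset (r i) h x).

Definition GL2 : GL2hat -> Prop := fun _ => True.

Definition SL2 : GL2hat -> Prop := fun g => forall n, \det (sval g n) = 1.

Definition B0 (N : nat) : GL2hat -> Prop := fun g => lvl g N ord_max ord0 = 0.

(* An imaginary quadratic order R = Z[w] with optimal embedding
   iota : R -> M_2(Z) is determined by M = iota(w) in M_2(Z):
   iota(R) = Z + Z M. *)
Definition imag_quadratic_order_emb (M : 'M[int]_2) : Prop :=
  (* R = Z[x]/(x^2 - tr x + det) is an imaginary quadratic order *)
  (\tr M) ^+ 2 - 4 * \det M < 0.

(* optimality: iota(K) ∩ M_2(Z) = iota(R), i.e. (a + bM)/k integral => k | a, b *)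
Definition optimal_emb (M : 'M[int]_2) : Prop :=
  forall a b k : int, k != 0 ->
    (forall i j, (k %| (a%:M + b *: M) i j)%Z) -> (k %| a)%Z /\ (k %| b)%Z.

(* 2 is inert in R = Z[x]/(x^2 - t x + q): R/2R = F_2[x]/(x^2 - t x + q) is a
   field, i.e. the polynomial has no root mod 2. *)
Definition two_inert (M : 'M[int]_2) : Prop :=
  forall x : int, ~~ (2 %| x ^+ 2 - \tr M * x + \det M)%Z.

Definition iotaN (N : nat) (M : 'M[int]_2) (A : 'M['Z_((N.-2).+2)]_2) : Prop :=
  exists a b : 'Z_((N.-2).+2),
    A = a%:M + b *: map_mx (fun z : int => z%:~R) M.

(* nonsplit Cartan of level N: pi_N^{-1}(iota_N(R)^* ); note pi_N g is
   already invertible, and an invertible element of the finite subring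
   iota_N(R) is a unit of it. *)
Definition Cns (N : nat) (M : 'M[int]_2) : GL2hat -> Prop :=
  fun g => iotaN N M (lvl g N).

Definition cap (P Q : GL2hat -> Prop) : GL2hat -> Prop := fun g => P g /\ Q g.

(* Every group involved contains the kernel of the reduction to level N = 2^n, and
   reduction maps GL_2(Zhat) and SL_2(Zhat) onto GL_2(Z/N) and SL_2(Z/N), so all indices
   may be computed in these finite groups.  There, for subgroups B, C of G,
   [G : B :&: C] = [G : B] [G : C] holds exactly when G = C B.  Since 2 is inert, the
   Cartan group acts transitively on unimodular first columns, whence GL_2 = C B.  In
   SL_2, the first column of c b is b_00 times that of c with det c = 1, so the norm
   attached to that column is the square of a unit; squares are 0 or 1 mod 4, whereas
   the norm form of an inert order takes the value 3 mod 4, which produces an element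
   of SL_2(Z/2^n) outside C B once n > 1. *)

From HB Require Import structures.
From mathcomp Require Import all_boot all_order all_algebra all_fingroup.
From mathcomp Require Import cyclic.
From mathcomp Require Import ring zify.
Import GRing.Theory Num.Theory.

Set Implicit Arguments.
Unset Strict Implicit.
Unset Printing Implicit Defensive.

Lemma totient_leq n : totient n <= n.
Proof.
rewrite totient_count_coprime.
apply: (@leq_trans (\sum_(0 <= d < n) 1)%N); first by apply: leq_sum => i _; apply: leq_b1.
by rewrite sum_nat_const_nat muln1 subn0.
Qed.

Lemma expn2D_fact_mod m a b : 0 < m -> m <= a -> m`! %| b -> 2 ^ (a + b) = 2 ^ a %[mod m].
Proof.
move=> m_gt0 le_ma fact_b.
apply/eqP; rewrite -(partnC 2 m_gt0) chinese_remainder ?coprime_partC //.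
apply/andP; split.
  have part2_dvd : m`_2 %| 2 ^ a.
    rewrite p_part dvdn_exp2l // (leq_trans _ le_ma) // ltnW //.
    by apply: leq_trans (ltn_expl _ (isT : 1 < 2)) _; rewrite -p_part dvdn_leq // dvdn_part.
  by rewrite expnD (eqP part2_dvd) (eqP (dvdn_mulr _ part2_dvd)).
set m' := m`_(2^').
have m'_coprime : coprime 2 m'.
  by apply: (pnat_coprime (pnat_id (isT : prime 2))); apply: part_pnat.
have /dvdnP[k ->] : totient m' %| b.
  apply: dvdn_trans fact_b; apply: dvdn_fact; rewrite totient_gt0 part_gt0 /=.
  by rewrite (leq_trans (totient_leq m')) // dvdn_leq // dvdn_part.
rewrite expnD -modnMmr [k * _]mulnC expnM -modnXm (Euler_exp_totient m'_coprime).
by rewrite modnXm exp1n modnMmr muln1.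
Qed.

Section CosetIndex.
Local Open Scope group_scope.

Lemma indexgI_mul (gT : finGroupType) (G B C : {group gT}) :
  B \subset G -> C \subset G ->
  (#|G : B :&: C| == #|G : B| * #|G : C|)%N = (G \subset C * B).
Proof.
move=> sBG sCG; have sCBG : C * B \subset G by rewrite mul_subG.
have LB := Lagrange sBG; have LC := Lagrange sCG.
have LI : (#|B :&: C| * #|G : B :&: C|)%N = #|G|.
  exact: Lagrange (subset_trans (subsetIl B C) sBG).
have I_gt0 : (0 < #|B :&: C|)%N := cardG_gt0 (B :&: C)%G.
have MCB := mul_cardG C B; rewrite setIC in MCB.
have key : muln (muln #|G : B| #|G : C|) #|C * B| = muln #|G| #|G : B :&: C|.
  apply/eqP; rewrite -(eqn_pmul2l I_gt0); apply/eqP.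
  rewrite [RHS]mulnCA LI -{1}LB -LC mulnACA [(#|B| * _)%N]mulnC MCB; lia.
have cardCB : (#|C * B| == #|G|) = (G \subset C * B) := (subset_leqif_card sCBG).2.
have idx_gt0 : (0 < #|G : B| * #|G : C|)%N by rewrite muln_gt0 !indexg_gt0.
rewrite -cardCB; apply/eqP/eqP => E; apply/eqP.
  by rewrite -(eqn_pmul2l idx_gt0) key E mulnC.
by rewrite -(eqn_pmul2l (cardG_gt0 G)) -key E mulnC.
Qed.

Lemma lcosets_enum (gT : finGroupType) (G H : {group gT}) : H \subset G ->
  exists r : 'I_#|G : H| -> gT,
    (forall i, r i \in G) /\ (forall x, x \in G -> exists! i, x \in r i *: H).
Proof.
move=> sHG; rewrite -card_lcosets; set L := lcosets H G.
have reprL Y : Y \in L -> repr Y \in G /\ Y = repr Y *: H.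
  case/lcosetsP => y yG ->; have /lcosetP[h hH ->] := mem_repr _ (lcoset_refl H y).
  by rewrite lcosetM (lcoset_id hH) groupM // (subsetP sHG).
exists (fun i => repr (enum_val i)); split=> [i | x xG].
  exact: (reprL _ (enum_valP i)).1.
have xL : x *: H \in L by rewrite mem_lcosets mulGSid.
exists (enum_rank_in xL (x *: H)); split=> [|i x_i].
  by rewrite enum_rankK_in // -(reprL _ xL).2 lcoset_refl.
apply: enum_val_inj; rewrite enum_rankK_in // {1}(reprL _ (enum_valP i)).2.
by apply/esym/lcoset_eqP; rewrite lcoset_sym.
Qed.

End CosetIndex.

Local Open Scope ring_scope.

Definition zredr {m n} of (m.+2 %| n.+2)%N : 'Z_n.+2 -> 'Z_m.+2 := zred m.+2 n.+2.

Section ZpReduction.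
Variables (m n : nat) (mn : (m.+2 %| n.+2)%N).
Local Notation zredr := (@zredr m n mn).

Lemma zredr_nat k : zredr k%:R = k%:R.
Proof.
rewrite /zredr /zred /= val_Zp_nat // -(Zp_nat_mod (isT : (1 < m.+2)%N)).
by rewrite modn_dvdm // Zp_nat_mod.
Qed.

Lemma zredr_is_nmod_morphism : nmod_morphism zredr.
Proof.
split=> [|x y]; first exact: (zredr_nat 0).
by rewrite -[x]natr_Zp -[y]natr_Zp -natrD !zredr_nat natrD.
Qed.

HB.instance Definition _ := GRing.isNmodMorphism.Build 'Z_n.+2 'Z_m.+2 zredr
  zredr_is_nmod_morphism.

Lemma zredr_is_monoid_morphism : monoid_morphism zredr.
Proof.
split=> [|x y]; first exact: (zredr_nat 1).
by rewrite -[x]natr_Zp -[y]natr_Zp -natrM !zredr_nat natrM.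
Qed.

HB.instance Definition _ := GRing.isMonoidMorphism.Build 'Z_n.+2 'Z_m.+2 zredr
  zredr_is_monoid_morphism.

End ZpReduction.

Lemma pchar_Z2 : 2%N \in [pchar 'Z_2].
Proof. exact: pchar_Fp. Qed.

Lemma Z2_norm_eq0 (a b : 'Z_2) : (a ^+ 2 + a * b + b ^+ 2 == 0) = (a == 0) && (b == 0).
Proof. by case: a => [[|[|?]] ?]; case: b => [[|[|?]] ?]. Qed.

Lemma Z4_sqr_neq3 (x : 'Z_4) : x ^+ 2 != 3%:R.
Proof. by case: x => [[|[|[|[|?]]]] ?]. Qed.

Notation zred42 := (zredr (isT : (2 %| 4)%N)).

Lemma Z4_norm_eq3 (t q : 'Z_4) : zred42 t = 1 -> zred42 q = 1 ->
  exists z : 'Z_4, z ^+ 2 + z * t + q = 3%:R.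
Proof.
case: t => [[|[|[|[|?]]]] ?] //; case: q => [[|[|[|[|?]]]] ?] // /eqP ? /eqP ? //.
all: first [by exists 0; apply/eqP | by exists 2%:R; apply/eqP].
Qed.

Section Matrix2.
Context {R : comPzRingType}.
Implicit Types (A B : 'M[R]_2) (a b c d : R).

Lemma det_mx2 A : \det A = A 0 0 * A 1 1 - A 0 1 * A 1 0.
Proof.
rewrite (expand_det_row _ 0) !big_ord_recl big_ord0 /cofactor !det_mx11 !mxE /=.
rewrite addr0 expr0 expr1 mul1r mulN1r mulrN.
by congr (A _ _ * A _ _ - A _ _ * A _ _); apply: val_inj.
Qed.

Lemma trace_mx2 A : \tr A = A 0 0 + A 1 1.
Proof.
rewrite /mxtrace !big_ord_recl big_ord0 addr0.
by congr (A _ _ + A _ _); apply: val_inj.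
Qed.

Lemma mulmx2E A B i j : (A *m B) i j = A i 0 * B 0 j + A i 1 * B 1 j.
Proof.
rewrite !mxE !big_ord_recl big_ord0 addr0.
by congr (A _ _ * B _ _ + A _ _ * B _ _); apply: val_inj.
Qed.

Lemma mulmx_lower0 A B : A 1 0 = 0 -> B 1 0 = 0 -> (A *m B) 1 0 = 0.
Proof. by rewrite mulmx2E => -> ->; rewrite mul0r mulr0 addr0. Qed.

Definition cartan A a b : 'M[R]_2 := a%:M + b *: A.

Lemma cartan00 A a b : cartan A a b 0 0 = a + b * A 0 0.
Proof. by rewrite !mxE /= mulr1n. Qed.

Lemma cartan10 A a b : cartan A a b 1 0 = b * A 1 0.
Proof. by rewrite !mxE /= mulr0n add0r. Qed.

Lemma det_cartan A a b : \det (cartan A a b) = a ^+ 2 + a * b * \tr A + b ^+ 2 * \det A.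
Proof.
rewrite !det_mx2 trace_mx2 !mxE /= mulr1n mulr0n.
by move: (A 0 0) (A 0 1) (A 1 0) (A 1 1) => x y z w; ring.
Qed.

Lemma scale_cartan A a b c : c *: cartan A a b = cartan A (c * a) (c * b).
Proof. by rewrite /cartan scalerDr scale_scalar_mx scalerA. Qed.

Lemma mul_cartan A a b c d :
  cartan A a b *m cartan A c d
  = cartan A (a * c - b * d * \det A) (a * d + b * c + b * d * \tr A).
Proof.
apply/matrixP => i j; rewrite mulmx2E det_mx2 trace_mx2 !mxE.
have ord2 (k : 'I_2) : k = 0 \/ k = 1 by case: k => [[|[|?]] ?] //; [left | right]; apply: val_inj.
case: (ord2 i) => ->; case: (ord2 j) => -> /=; rewrite ?mulr1n ?mulr0n.
all: by move: (A 0 0) (A 0 1) (A 1 0) (A 1 1) => x y z w; ring.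
Qed.

End Matrix2.

Lemma two_inert_Z2 (M : 'M[int]_2) : two_inert M ->
  let m := map_mx intr M : 'M['Z_2]_2 in [/\ m 1 0 = 1, \tr m = 1 & \det m = 1].
Proof.
move=> inert m.
have no_root (x : int) : x%:~R ^+ 2 - \tr m * x%:~R + \det m != 0 :> 'Z_2.
  have := inert x; rewrite (dvdz_pcharf pchar_Z2).
  by rewrite rmorphD rmorphB rmorphXn rmorphM -det_map_mx -trace_map_mx.
move: (no_root 0) (no_root 1); rewrite expr0n mulr0 subr0 add0r expr1n mulr1.
rewrite det_mx2 trace_mx2; move: (m 0 0) (m 0 1) (m 1 0) (m 1 1) => a b c d.
move=> h0 h1; suff /and3P[/eqP-> /eqP-> /eqP->] : [&& c == 1, a + d == 1 & a * d - b * c == 1] by [].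
move: h1; apply/implyP; move: h0; apply/implyP.
by case: a => [[|[|?]] ?]; case: b => [[|[|?]] ?]; case: c => [[|[|?]] ?]; case: d => [[|[|?]] ?].
Qed.

Lemma map_mx_intrK (R S : pzRingType) (f : {rmorphism R -> S}) m n (M : 'M[int]_(m, n)) :
  map_mx f (map_mx intr M) = map_mx intr M.
Proof. by rewrite -map_mx_comp; apply: eq_map_mx => z; rewrite /= rmorph_int. Qed.

Lemma two_inert_residue (R : comPzRingType) (f : {rmorphism R -> 'Z_2}) (M : 'M[int]_2) :
  two_inert M -> let A := map_mx intr M : 'M[R]_2 in
  [/\ f (A 1 0) = 1, f (\tr A) = 1 & f (\det A) = 1].
Proof.
move=> /two_inert_Z2[m10 tr1 det1] A.
have fA : map_mx f A = map_mx intr M by rewrite map_mx_intrK.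
have fA10 : f (A 1 0) = map_mx f A 1 0 by rewrite [RHS]mxE.
by rewrite fA10 -trace_map_mx -det_map_mx fA; split.
Qed.

Section CartanBorel.
Context {R : comUnitRingType} {A : 'M[R]_2} {f2 : {rmorphism R -> 'Z_2}}.
Hypothesis unit_f2 : forall x, (x \is a GRing.unit) = (f2 x != 0).
Hypotheses (A10 : f2 (A 1 0) = 1) (trA : f2 (\tr A) = 1) (detA : f2 (\det A) = 1).

Lemma unitmx_cartan a b : (cartan A a b \in unitmx) = (f2 a != 0) || (f2 b != 0).
Proof.
rewrite unitmxE unit_f2 det_cartan !rmorphD !rmorphXn !rmorphM trA detA !mulr1.
by rewrite Z2_norm_eq0 negb_and.
Qed.

Lemma unit_A10 : A 1 0 \is a GRing.unit.
Proof. by rewrite unit_f2 A10 oner_neq0. Qed.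

Lemma cartan_col0_inj a b c d :
  cartan A a b 0 0 = cartan A c d 0 0 -> cartan A a b 1 0 = cartan A c d 1 0 -> a = c /\ b = d.
Proof.
rewrite !cartan00 !cartan10.
move=> e0 e1; have {}e1 := mulIr unit_A10 e1; rewrite e1 in e0.
by split=> //; apply: (addIr (d * A 0 0)).
Qed.

Lemma cartan_col0_surj x y : exists a b, cartan A a b 0 0 = x /\ cartan A a b 1 0 = y.
Proof.
exists (x - y / A 1 0 * A 0 0), (y / A 1 0); rewrite cartan00 cartan10.
by rewrite subrK divrK ?unit_A10.
Qed.

Lemma cartan_borel_factor U : U \in unitmx ->
  exists a b, cartan A a b \in unitmx /\ (invmx (cartan A a b) *m U) 1 0 = 0.
Proof.
(* c has the first column of U, so c^-1 U fixes the first basis vector. *)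
move=> unitU; have [a [b [e0 e1]]] := cartan_col0_surj (U 0 0) (U 1 0).
have unitC : cartan A a b \in unitmx.
  rewrite unitmx_cartan; apply: contraTT unitU; rewrite negb_or !negbK => /andP[/eqP fa /eqP fb].
  rewrite unitmxE unit_f2 det_mx2 negbK -e0 -e1 cartan00 cartan10.
  by rewrite !(rmorphD, rmorphN, rmorphM) fa fb !(mul0r, mulr0, add0r, oppr0).
exists a, b; split=> //.
by rewrite mulmx2E -e0 -e1 -mulmx2E mulVmx // mxE.
Qed.

Context {f4 : {rmorphism R -> 'Z_4}}.
Hypotheses (trA4 : zred42 (f4 (\tr A)) = 1) (detA4 : zred42 (f4 (\det A)) = 1).

Lemma SL2_cartan_borel_gap : exists2 H : 'M[R]_2, \det H = 1 &
  forall a b (V : 'M[R]_2), \det (cartan A a b) = 1 -> V 1 0 = 0 -> H <> cartan A a b *m V.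
Proof.
have [w norm_w] := Z4_norm_eq3 trA4 detA4.
pose z : R := (w : nat)%:R; pose C := cartan A z 1.
have f4z : f4 z = w by rewrite rmorph_nat natr_Zp.
pose x := C 0 0; pose y := C 1 0.
have unit_y : y \is a GRing.unit by rewrite /y cartan10 mul1r unit_A10.
(* H completes the first column of C, whose determinant is 3 mod 4, to an element of SL_2. *)
pose H : 'M[R]_2 := \matrix_(i, j) if i == 0 then (if j == 0 then x else - y^-1)
                                  else (if j == 0 then y else 0).
exists H; first by rewrite det_mx2 !mxE /= mulr0 sub0r mulNr opprK mulVr.
move=> a b V detC V10 eH.
(* That column is V 0 0 times the first column of c, hence C = V 0 0 *: c. *)
have eH0 (i : 'I_2) : H i 0 = cartan A (V 0 0 * a) (V 0 0 * b) i 0.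
  by rewrite eH mulmx2E V10 mulr0 addr0 -scale_cartan [RHS]mxE mulrC.
have [za zb] : z = V 0 0 * a /\ 1 = V 0 0 * b.
  by apply: cartan_col0_inj; rewrite -eH0 [RHS]mxE.
have : \det C = V 0 0 ^+ 2.
  by rewrite /C za zb -scale_cartan detZ detC mulr1.
move=> /(congr1 f4); rewrite det_cartan !rmorphD !rmorphXn !rmorphM f4z rmorph1.
rewrite mulr1 !mul1r norm_w => /esym/eqP.
exact/negP/Z4_sqr_neq3.
Qed.

End CartanBorel.

Section LevelGroups.
Variables (R : finComUnitRingType) (A : 'M[R]_2).
Local Notation gT := {'GL_2[R]}.

Definition borel_set := [set u : gT | GLval u 1 0 == 0].
Definition cartan_set := [set u : gT | [exists a, exists b, GLval u == cartan A a b]].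
Definition SL_set := [set u : gT | \det (GLval u) == 1].

Lemma group_set_borel : group_set borel_set.
Proof.
apply/group_setP; split=> [|u v]; first by rewrite inE GL_1E mxE.
rewrite !inE GL_MxE => /eqP u10 /eqP v10; apply/eqP; exact: mulmx_lower0.
Qed.

Lemma group_set_cartan : group_set cartan_set.
Proof.
apply/group_setP; split=> [|u v].
  by rewrite inE GL_1E; apply/existsP; exists 1; apply/existsP; exists 0; rewrite /cartan scale0r addr0.
rewrite !inE GL_MxE => /existsP[a /existsP[b /eqP ->]] /existsP[c /existsP[d /eqP ->]].
by rewrite mul_cartan; apply/existsP; eexists; apply/existsP; eexists.
Qed.

Lemma group_set_SL : group_set SL_set.
Proof.
apply/group_setP; split=> [|u v]; first by rewrite inE GL_1E det1.
by rewrite !inE GL_MxE det_mulmx => /eqP-> /eqP->; rewrite mulr1.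
Qed.

Canonical borel_group := Group group_set_borel.
Canonical cartan_group := Group group_set_cartan.
Canonical SL_group := Group group_set_SL.

Lemma GLval_insubd (X : 'M[R]_2) : X \in unitmx -> GLval (insubd (1%g : gT) X) = X.
Proof. by move=> unitX; rewrite -[GLval _]/(val _) insubdK. Qed.

Variable f2 : {rmorphism R -> 'Z_2}.
Hypothesis unit_f2 : forall x, (x \is a GRing.unit) = (f2 x != 0).
Hypotheses (A10 : f2 (A 1 0) = 1) (trA : f2 (\tr A) = 1) (detA : f2 (\det A) = 1).

Lemma GL2_subset_cartan_borel : ('GL_2[R] \subset cartan_set * borel_set)%g.
Proof.
apply/subsetP => u _; have [a [b [unitC borel_Cu]]] := cartan_borel_factor unit_f2 A10 trA detA (GL_unitmx u).
pose c := insubd (1%g : gT) (cartan A a b).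
rewrite -(mulKVg c u); apply: mem_mulg.
  by rewrite inE GLval_insubd //; apply/existsP; exists a; apply/existsP; exists b.
by rewrite inE GL_MxE GL_VxE GLval_insubd // borel_Cu.
Qed.

Variable f4 : {rmorphism R -> 'Z_4}.
Hypotheses (trA4 : zred42 (f4 (\tr A)) = 1) (detA4 : zred42 (f4 (\det A)) = 1).

Lemma SL2_not_subset_cartan_borel :
  ~~ (SL_set \subset ((cartan_set :&: SL_set) * (borel_set :&: SL_set))%g).
Proof.
have [H detH notCB] := SL2_cartan_borel_gap unit_f2 A10 trA4 detA4.
have unitH : H \in unitmx by rewrite unitmxE detH unitr1.
apply/subsetPn; exists (insubd (1%g : gT) H); first by rewrite inE GLval_insubd ?detH.
apply/mulsgP => -[c v]; rewrite !inE => /andP[/existsP[a /existsP[b /eqP ec]] /eqP detc].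
move=> /andP[/eqP v10 _] /(congr1 GLval); rewrite GLval_insubd // GL_MxE ec.
by apply: notCB; rewrite -?ec.
Qed.

End LevelGroups.

Lemma natr_Zp_eq j x y : x = y %[mod j.+2] -> (x%:R : 'Z_j.+2) = y%:R.
Proof. by move=> e; rewrite -(Zp_nat_mod (isT : (1 < j.+2)%N)) e Zp_nat_mod. Qed.

(* The idempotent of Z/m that vanishes on the 2-part of m and is 1 on its odd part. *)
Definition odd_idem j : 'Z_j.+2 := (2 ^ (j.+2)`!)%:R.

Lemma odd_idem_idem j : odd_idem j * odd_idem j = odd_idem j.
Proof.
rewrite -natrM -expnD; apply: natr_Zp_eq.
by apply: expn2D_fact_mod => //; apply: fact_geq.
Qed.

Lemma expn2_fact_dvd_mod j i : (j.+2 %| i.+2)%N -> 2 ^ (i.+2)`! = 2 ^ (j.+2)`! %[mod j.+2].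
Proof.
move=> ji; have le_ji : (j.+2 <= i.+2)%N by apply: dvdn_leq.
rewrite -(subnKC (leq_fact le_ji)); apply: expn2D_fact_mod; rewrite ?fact_geq //.
by apply: dvdn_sub => //; rewrite -(bin_fact le_ji) mulnCA dvdn_mulr.
Qed.

Lemma odd_idem_pow2 n K : K.+2 = (2 ^ n)%N -> odd_idem K = 0.
Proof.
move=> eK; have dvd_K : (K.+2 %| 2 ^ (K.+2)`!)%N.
  by rewrite {1}eK dvdn_exp2l // (leq_trans _ (fact_geq _)) // eK ltnW // ltn_expl.
by rewrite /odd_idem -(Zp_nat_mod (isT : (1 < K.+2)%N)) (eqP dvd_K).
Qed.

Lemma unitr_idem_shift (R : comUnitRingType) (e d q : R) k :
  e * e = e -> d ^+ k.+1 = 1 + q * e -> (1 - e) * d + e \is a GRing.unit.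
Proof.
move=> ee dk; apply/unitrP; exists ((1 - e) * d ^+ k + e).
suff inv : ((1 - e) * d ^+ k + e) * ((1 - e) * d + e) = 1 by split; rewrite // mulrC.
have -> : ((1 - e) * d ^+ k + e) * ((1 - e) * d + e)
        = (1 - e) * d ^+ k.+1 + e + (e * e - e) * (d ^+ k.+1 - d - d ^+ k + 1).
  by rewrite !exprS; ring.
by rewrite ee subrr mul0r addr0 dk mulrDr mulr1 mulrCA mulrBl mul1r ee subrr mulr0 addr0 subrK.
Qed.

Lemma det_idem_shift (R : comPzRingType) (e : R) (B : 'M[R]_2) :
  e * e = e -> \det ((1 - e) *: B + e%:M) = (1 - e) * \det B + e.
Proof.
move=> ee; rewrite !det_mx2 !mxE /= mulr1n mulr0n !addr0.
have -> : forall a b c d : R, ((1 - e) * a + e) * ((1 - e) * d + e) - ((1 - e) * b) * ((1 - e) * c)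
   = (1 - e) * (a * d - b * c) + e + (e * e - e) * (a * d - b * c - a - d + 1).
  by move=> a b c d; ring.
by rewrite ee subrr mul0r addr0.
Qed.

Lemma unit_odd_idem_shift j (D : int) :
  ~~ (2 %| D)%Z -> (1 - odd_idem j) * D%:~R + odd_idem j \is a GRing.unit.
Proof.
move=> oddD; set E := (j.+2)`!; set T := totient (2 ^ E).
have T_gt0 : (0 < T)%N by rewrite totient_gt0 expn_gt0.
have sqrD : D * D = (`|D| * `|D|)%N :> int by rewrite -abszM gez0_abs // -expr2 sqr_ge0.
have odd_absD : odd `|D| by move: oddD; rewrite dvdzE dvdn2 negbK.
have coprime_D : coprime (`|D| * `|D|) (2 ^ E).
  by rewrite coprime_pexpr ?fact_gt0 // coprimen2 oddM odd_absD.
have E_gt1 : (1 < 2 ^ E)%N by rewrite -{1}(expn0 2) ltn_exp2l // fact_gt0.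
set q := ((`|D| * `|D|) ^ T %/ 2 ^ E)%N.
have euler : ((`|D| * `|D|) ^ T = q * 2 ^ E + 1)%N.
  by rewrite {1}(divn_eq (_ ^ T) (2 ^ E)) (Euler_exp_totient coprime_D) modn_small.
apply: (@unitr_idem_shift _ _ _ q%:R (2 * T).-1 (odd_idem_idem j)).
rewrite prednK ?muln_gt0 // exprM expr2 -rmorphM sqrD -natz rmorph_nat -natrX.
by rewrite euler natrD natrM addrC.
Qed.

Definition unit_family (g : forall j, 'M['Z_j.+2]_2) :=
  (forall j, g j \in unitmx) /\
  (forall m n, (m.+2 %| n.+2)%N -> g m = map_mx (zred m.+2 n.+2) (g n)).

Lemma gl2hat_unit (g : GL2hat) j : sval g j \in unitmx.
Proof. exact: (proj1 (svalP g)). Qed.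

Lemma gl2hat_compat (g : GL2hat) m n (mn : (m.+2 %| n.+2)%N) :
  sval g m = map_mx (zredr mn) (sval g n).
Proof. exact: (proj2 (svalP g)). Qed.

Section Lift.
Variables (n K : nat) (eK : K.+2 = (2 ^ n)%N) (X : 'M['Z_K.+2]_2).
Hypothesis unitX : X \in unitmx.

Definition int_lift : 'M[int]_2 := map_mx (fun x : 'Z_K.+2 => (x : nat)%:Z) X.

Lemma int_liftK : map_mx intr int_lift = X.
Proof. by apply/matrixP => i j; rewrite !mxE -pmulrn natr_Zp. Qed.

(* X on the 2-primary part of every level, the identity on the odd part. *)
Definition lift_at j : 'M['Z_j.+2]_2 :=
  (1 - odd_idem j) *: map_mx intr int_lift + (odd_idem j)%:M.

Lemma lift_at_compat j i (ji : (j.+2 %| i.+2)%N) :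
  lift_at j = map_mx (zred j.+2 i.+2) (lift_at i).
Proof.
rewrite -[map_mx _ _]/(map_mx (zredr ji) _) map_mxD map_mxZ map_scalar_mx.
rewrite rmorphB rmorph1 /odd_idem rmorph_nat (natr_Zp_eq (expn2_fact_dvd_mod ji)).
by rewrite map_mx_intrK.
Qed.

Lemma dvd2_level : (2 %| K.+2)%N.
Proof. by case: n eK => // m ->; rewrite expnS dvdn_mulr. Qed.

Lemma lift_at_unit j : lift_at j \in unitmx.
Proof.
rewrite unitmxE det_idem_shift ?odd_idem_idem // det_map_mx; apply: unit_odd_idem_shift.
have : zredr dvd2_level (\det X) \is a GRing.unit by rewrite rmorph_unit // -unitmxE.
rewrite -int_liftK det_map_mx rmorph_int (dvdz_pcharf pchar_Z2).
by apply: contraL => /eqP->; rewrite unitr0.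
Qed.

Lemma unit_family_lift : unit_family lift_at.
Proof. by split=> [|j i]; [exact: lift_at_unit | exact: lift_at_compat]. Qed.

Definition gl2hat_lift : GL2hat := exist _ _ unit_family_lift.

Lemma gl2hat_liftK : sval gl2hat_lift K = X.
Proof. by rewrite /= /lift_at (odd_idem_pow2 eK) subr0 scale1r raddf0 addr0 int_liftK. Qed.

End Lift.

Lemma map_invmx_unit (aR rR : comUnitRingType) (f : {rmorphism aR -> rR}) n (A : 'M[aR]_n) :
  A \in unitmx -> map_mx f (invmx A) = invmx (map_mx f A).
Proof.
move=> unitA; have unitfA : map_mx f A \in unitmx by rewrite unitmxE det_map_mx rmorph_unit.
by rewrite /invmx unitA unitfA map_mxZ map_mx_adj det_map_mx rmorphV.
Qed.

Lemma unit_family_ldiv (r x : GL2hat) : unit_family (fun j => invmx (sval r j) *m sval x j).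
Proof.
split=> [j | m n mn]; first by rewrite unitmx_mul unitmx_inv !gl2hat_unit.
rewrite -[map_mx _ _]/(map_mx (zredr mn) _) map_mxM map_invmx_unit ?gl2hat_unit //.
by rewrite -!gl2hat_compat.
Qed.

Definition gl2hat_ldiv (r x : GL2hat) : GL2hat := exist _ _ (unit_family_ldiv r x).

Definition diag1 (R : pzRingType) (d : R) : 'M[R]_2 :=
  \matrix_(i, j) if i == j then (if i == 0 then 1 else d) else 0.

Lemma det_diag1 (R : comPzRingType) (d : R) : \det (diag1 d) = d.
Proof. by rewrite det_mx2 !mxE /= mul1r mulr0 subr0. Qed.

Lemma map_diag1 (aR rR : pzRingType) (f : {rmorphism aR -> rR}) (d : aR) :
  map_mx f (diag1 d) = diag1 (f d).
Proof.
apply/matrixP => i j; rewrite !mxE.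
by case: (i == j); rewrite ?rmorph0 //; case: (i == 0); rewrite ?rmorph1.
Qed.

Lemma unit_family_normdet (g : GL2hat) :
  unit_family (fun j => sval g j *m diag1 (\det (sval g j))^-1).
Proof.
split=> [j | m n mn].
  by rewrite unitmx_mul gl2hat_unit unitmxE det_diag1 unitrV -unitmxE gl2hat_unit.
rewrite -[map_mx _ _]/(map_mx (zredr mn) _) map_mxM map_diag1 rmorphV; last first.
  by rewrite -unitmxE gl2hat_unit.
by rewrite -det_map_mx -gl2hat_compat.
Qed.

Definition gl2hat_normdet (g : GL2hat) : GL2hat := exist _ _ (unit_family_normdet g).

Lemma SL2_normdet g : SL2 (gl2hat_normdet g).
Proof. by move=> j; rewrite /= det_mulmx det_diag1 divrr // -unitmxE gl2hat_unit. Qed.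

Lemma gl2hat_normdet_id g j : \det (sval g j) = 1 -> sval (gl2hat_normdet g) j = sval g j.
Proof.
move=> detg; rewrite /= detg invr1 -[RHS]mulmx1; congr (_ *m _).
by apply/matrixP => a b; rewrite !mxE; case: (a == b); rewrite ?if_same.
Qed.

Lemma SL2_ldiv r x : SL2 r -> SL2 x -> SL2 (gl2hat_ldiv r x).
Proof. by move=> SLr SLx j; rewrite /= det_mulmx det_inv SLr SLx invr1 mulr1. Qed.

Section Level.
Variables (n K : nat) (eK : K.+2 = (2 ^ n)%N).
Local Notation gT := {'GL_2['Z_K.+2]}.

Definition lvlGL (g : GL2hat) : gT := insubd (1%g : gT) (sval g K).

Lemma val_lvlGL g : val (lvlGL g) = sval g K.
Proof. exact/insubdK/gl2hat_unit. Qed.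

Lemma lvlGL_ldiv r x : lvlGL (gl2hat_ldiv r x) = ((lvlGL r)^-1 * lvlGL x)%g.
Proof. by apply: val_inj; rewrite /= !val_lvlGL. Qed.

Lemma lvlGL_coset r h x : in_coset r h x -> lvlGL x = (lvlGL r * lvlGL h)%g.
Proof. by move=> rhx; apply: val_inj; rewrite /= !val_lvlGL rhx. Qed.

Lemma has_index_lvl (G H : GL2hat -> Prop) (Gb Hb : {group gT}) (lift : gT -> GL2hat) :
  (forall g, G g -> lvlGL g \in Gb) ->
  (forall u, u \in Gb -> G (lift u) /\ lvlGL (lift u) = u) ->
  (forall g, H g <-> G g /\ lvlGL g \in Hb) ->
  (forall r x, G r -> G x -> G (gl2hat_ldiv r x)) ->
  Hb \subset Gb -> has_index G H #|Gb : Hb|%g.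
Proof.
move=> GGb liftP HP G_ldiv sHG; split=> [h /HP[] //|].
have [r [rG r_uniq]] := lcosets_enum sHG.
exists (fun i => lift (r i)); split=> [i | x Gx]; first by have [] := liftP _ (rG i).
have [i [x_i i_uniq]] := r_uniq _ (GGb _ Gx).
have [G_ri lift_ri] := liftP _ (rG i).
exists i; split.
  exists (gl2hat_ldiv (lift (r i)) x); split=> [|j]; last first.
    by rewrite /= mulmxA mulmxV ?mul1mx ?gl2hat_unit.
  by apply/HP; split; [exact: G_ldiv | rewrite lvlGL_ldiv lift_ri -mem_lcoset].
move=> j [h [Hh rjhx]]; apply: i_uniq; have [_ lift_rj] := liftP _ (rG j).
by rewrite (lvlGL_coset rjhx) lift_rj mem_lcoset mulKg; case/HP: Hh.
Qed.

Lemma has_index_GL2_lvl (H : GL2hat -> Prop) (Hb : {group gT}) :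
  (forall g, H g <-> lvlGL g \in Hb) -> has_index GL2 H #|'GL_2['Z_K.+2] : Hb|%g.
Proof.
move=> HP; apply: (@has_index_lvl _ _ _ _ (fun u => gl2hat_lift eK (GL_unitmx u))).
- by move=> g _; rewrite inE.
- by move=> u _; split=> //; apply: val_inj; rewrite val_lvlGL gl2hat_liftK.
- by move=> g; rewrite HP; split=> // -[].
- by [].
- exact: subsetT.
Qed.

Lemma SL2_lvlGL g : SL2 g -> lvlGL g \in SL_set 'Z_K.+2.
Proof. by move=> SLg; rewrite inE; apply/eqP; rewrite -[GLval _]/(val _) val_lvlGL; apply: SLg. Qed.

Lemma has_index_SL2_lvl (H : GL2hat -> Prop) (Hb : {group gT}) :
  (forall g, H g <-> lvlGL g \in Hb) ->
  has_index SL2 (cap H SL2) #|SL_set 'Z_K.+2 : Hb :&: SL_set 'Z_K.+2|%g.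
Proof.
move=> HP.
apply: (@has_index_lvl _ _ _ _ (fun u => gl2hat_normdet (gl2hat_lift eK (GL_unitmx u)))).
- exact: SL2_lvlGL.
- move=> u; rewrite inE => /eqP detu; split; first exact: SL2_normdet.
  by apply: val_inj; rewrite val_lvlGL gl2hat_normdet_id ?gl2hat_liftK.
- move=> g; rewrite in_setI; split=> [[/HP Hg SLg] | [SLg /andP[/HP Hg _]]] //.
  by rewrite Hg SL2_lvlGL.
- exact: SL2_ldiv.
- exact: subsetIr.
Qed.

Lemma cap_lvlGL (P Q : GL2hat -> Prop) (A B : {set gT}) :
  (forall g, P g <-> lvlGL g \in A) -> (forall g, Q g <-> lvlGL g \in B) ->
  forall g, cap P Q g <-> lvlGL g \in A :&: B.
Proof. by move=> PA QB g; rewrite in_setI /cap PA QB; split=> [[-> ->] | /andP]. Qed.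

Lemma B0_lvlGL g : B0 K.+2 g <-> lvlGL g \in borel_group 'Z_K.+2.
Proof.
rewrite /B0 /lvl inE -[GLval _]/(val _) val_lvlGL /=.
have -> : (ord_max : 'I_2) = 1 by apply: val_inj.
by split=> /eqP.
Qed.

Lemma Cns_lvlGL (M : 'M[int]_2) g : Cns K.+2 M g <-> lvlGL g \in cartan_group (map_mx intr M).
Proof.
rewrite /Cns /iotaN /lvl inE -[GLval _]/(val _) val_lvlGL /=.
split=> [[a [b e]] | /existsP[a /existsP[b /eqP e]]].
  by apply/existsP; exists a; apply/existsP; exists b; rewrite e.
by exists a, b.
Qed.

End Level.

Lemma unit_Zp_pow2 n K (eK : K.+2 = (2 ^ n)%N) (x : 'Z_K.+2) :
  (x \is a GRing.unit) = (zredr (dvd2_level eK) x != 0).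
Proof.
have n_gt0 : (0 < n)%N by case: n eK.
rewrite -(natr_Zp x) unitZpE // zredr_nat; move: (x : nat) => v.
rewrite eK coprime_pexpl // coprime2n -[_ == 0](inj_eq val_inj) /= val_Zp_nat // modn2.
by case: (odd v).
Qed.

Theorem mainTheorem2 (n : nat) (M : 'M[int]_2) :
  (1 <= n)%N ->
  imag_quadratic_order_emb M -> optimal_emb M -> two_inert M ->
  let N := (2 ^ n)%N in
  (exists a b c : nat,
     has_index GL2 (cap (B0 N) (Cns N M)) a /\
     has_index GL2 (B0 N) b /\
     has_index GL2 (Cns N M) c /\
     a = (b * c)%N) /\
  ((1 < n)%N ->
   exists a b c : nat,
     has_index SL2 (cap (cap (B0 N) (Cns N M)) SL2) a /\
     has_index SL2 (cap (B0 N) SL2) b /\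
     has_index SL2 (cap (Cns N M) SL2) c /\
     a <> (b * c)%N).
Proof.
move=> n_gt0 _ _ inert N.
have [K eK] : exists K, K.+2 = (2 ^ n)%N.
  have : (2 <= 2 ^ n)%N by rewrite -{1}(expn1 2) leq_exp2l.
  by exists (2 ^ n).-2; lia.
rewrite /N -eK.
have BC g : cap (B0 K.+2) (Cns K.+2 M) g <->
            lvlGL K g \in (borel_group _ :&: cartan_group (map_mx intr M))%G.
  exact: cap_lvlGL (B0_lvlGL K) (Cns_lvlGL K M) g.
have [A10 trA detA] := two_inert_residue (zredr (dvd2_level eK)) inert.
split.
  do 3!eexists; split; [|split; [|split]].
  - exact: (has_index_GL2_lvl eK BC).
  - exact: (has_index_GL2_lvl eK (B0_lvlGL K)).
  - exact: (has_index_GL2_lvl eK (Cns_lvlGL K M)).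
  apply/eqP; rewrite indexgI_mul ?subsetT //.
  exact: GL2_subset_cartan_borel (unit_Zp_pow2 eK) A10 trA detA.
move=> n_gt1; have dvd4 : (4 %| K.+2)%N by rewrite eK -[4%N]/(2 ^ 2)%N dvdn_exp2l.
have [_ trA4 detA4] := two_inert_residue (zred42 \o zredr dvd4) inert.
do 3!eexists; split; [|split; [|split]].
- exact: (has_index_SL2_lvl eK BC).
- exact: (has_index_SL2_lvl eK (B0_lvlGL K)).
- exact: (has_index_SL2_lvl eK (Cns_lvlGL K M)).
have -> : (borel_set 'Z_K.+2 :&: cartan_set (map_mx intr M)) :&: SL_set 'Z_K.+2
        = (borel_set _ :&: SL_set _) :&: (cartan_set (map_mx intr M) :&: SL_set _).
  by rewrite setIACA setIid.
apply/eqP; rewrite indexgI_mul ?subsetIr //.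
exact: (SL2_not_subset_cartan_borel (f4 := zredr dvd4) (unit_Zp_pow2 eK) A10 trA4 detA4).
Qed.
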